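(* Let $F$ be a finite field of odd characteristic in which $-1$ is not a square, let $z,z'\in F$ with $z\neq z'$, and let $g_z,g_{z'}:F^3\to\mathbb{C}$ be functions supported on the planes $\{x_3=z\}$ and $\{x_3=z'\}$ respectively, each $\sim 1$ on its support. Let $G_z=\{\underline{x}\in F^2:g_z(\underline{x},z)\ne0\}$ and $G_{z'}=\{\underline{x}\in F^2:g_{z'}(\underline{x},z')\ne0\}$. Then $$\big\|(g_z*K)\,(g_{z'}*K)\big\|_{L^2(F^3)}^2 \lesssim |F|^{-1}|G_z|\,|G_{z'}| + |F|^{-2}\,\mathcal{T}(G_z,G_{z'}).$$
   Context: $e:(F,+)\to\mathbb{C}^\times$ is a fixed nontrivial additive character; $x\cdot y=\sum_i x_iy_i$ on $F^d$; points of $F^3$ are $x=(\underline{x},x_3)$. $P=\{(\underline{x},\underline{x}\cdot\underline{x}):\underline{x}\in F^2\}$. $F^3$ carries counting measure, $\|h\|_{L^2(F^3)}=(\sum_x|h(x)|^2)^{1/2}$, $(h_1*h_2)(x)=\sum_{y}h_1(y)h_2(x-y)$. $(d\sigma)^{\vee}(x)=|F|^{-2}\sum_{\xi\in P}e(x\cdot\xi)$, $\delta$ is the indicator of $0\in F^3$, $K:=(d\sigma)^{\vee}-\delta$. ''$h\sim1$ on its support'' means $\tfrac12\le|h|\le2$ wherever $h\neq0$. A quadruple $(x_1,x_2,x_3,x_4)$ of points of $F^2$ is a trapezoid if there exists $\lambda\in F$ with $x_1-x_2=\lambda(x_3-x_4)$. For $A,B\subseteq F^2$, $\mathcal{T}(A,B)$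 is the number of trapezoids $(x_1,x_2,x_3,x_4)$ with $x_1,x_2\in A$ and $x_3,x_4\in B$. $X\lesssim Y$ means $X\le CY$ with $C$ an absolute constant. *)

From HB Require Import structures.
From mathcomp Require Import all_boot all_order all_algebra all_field.
Set Implicit Arguments. Unset Strict Implicit. Unset Printing Implicit Defensive.
Import Order.TTheory GRing.Theory Num.Theory.
Local Open Scope ring_scope.

(* Complex numbers are modelled by algC (algebraic complex numbers): all values
   involved (character values, |F|^-2, sums) are algebraic. *)

Notation pt F := (((F * F) * F)%type).

Section Defs.
Variable F : finFieldType.

Definition dot2 (u v : F * F) : F := u.1 * v.1 + u.2 * v.2.
Definition dot3 (x y : pt F) : F := dot2 x.1 y.1 + x.2 * y.2.
Definition sub3 (x y : pt F) : pt F :=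
  ((x.1.1 - y.1.1, x.1.2 - y.1.2), x.2 - y.2).

Definition is_nontriv_add_char (e : F -> algC) : Prop :=
  (forall x y, e (x + y) = e x * e y) /\ (exists x, e x != 1).

Definition dsigma_check (e : F -> algC) (x : pt F) : algC :=
  (#|F|%:R)^-2 * \sum_(u : F * F) e (dot3 x (u, dot2 u u)).

Definition delta0 (x : pt F) : algC := if x == ((0, 0), 0) then 1 else 0.

Definition Kker (e : F -> algC) (x : pt F) : algC := dsigma_check e x - delta0 x.

Definition conv (h1 h2 : pt F -> algC) (x : pt F) : algC :=
  \sum_(y : pt F) h1 y * h2 (sub3 x y).

Definition sim1_on_support (h : pt F -> algC) : Prop :=
  forall x, h x != 0 -> 2^-1 <= `|h x| <= 2.

Definition supported_on_plane (h : pt F -> algC) (z : F) : Prop :=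
  forall x, h x != 0 -> x.2 = z.

Definition slice (h : pt F -> algC) (z : F) : {set F * F} :=
  [set u : F * F | h (u, z) != 0].

Definition trapezoid (x1 x2 x3 x4 : F * F) : bool :=
  [exists l : F, (x1.1 - x2.1 == l * (x3.1 - x4.1)) &&
                 (x1.2 - x2.2 == l * (x3.2 - x4.2))].

Definition trap_count (A B : {set F * F}) : nat :=
  #|[set q : ((F * F) * (F * F)) * ((F * F) * (F * F)) |
     [&& q.1.1 \in A, q.1.2 \in A, q.2.1 \in B, q.2.2 \in B &
         trapezoid q.1.1 q.1.2 q.2.1 q.2.2]]|.

Definition L2sq (h : pt F -> algC) : algC := \sum_(x : pt F) `|h x| ^+ 2.

End Defs.

From HB Require Import structures.
From mathcomp Require Import all_boot all_order all_algebra all_field.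
From mathcomp Require Import ring.
Set Implicit Arguments. Unset Strict Implicit. Unset Printing Implicit Defensive.
Import Order.TTheory GRing.Theory Num.Theory.
Local Open Scope ring_scope.

(* For t <> 0, completing the square gives
     K(v, t) = |F|^-2 G(t) e(-|v|^2/(4t)),   G(t) = sum_u e(t u.u),
   with |G(t)| = |F|, while K vanishes on the plane t = 0.  So on the plane
   x_3 = w the product (g_z*K)(g_z'*K) equals |F|^-4 G(w-z) G(w-z') times an
   exponential sum over pairs (a, b) in G_z x G_z' whose phase is quadratic in x.
   Expanding its squared L^2 norm, orthogonality of characters keeps only pairs of
   pairs whose phases have the same linear part, i.e.
     (w - z')(a1 - a2) + (w - z)(b1 - b2) = 0,
   which costs |F|^-2 per surviving term.  Summing over w, a diagonal term survives
   for every w, and an off-diagonal one for at most one w (as z <> z'), and only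
   if (a1, a2, b1, b2) is a trapezoid. *)

Lemma big_pair (R : Type) (idx : R) (op : Monoid.com_law idx) (I J : finType)
    (f : I * J -> R) :
  \big[op/idx]_p f p = \big[op/idx]_i \big[op/idx]_j f (i, j).
Proof. by rewrite pair_bigA; apply: eq_bigr => -[]. Qed.

Lemma sum_nat_of_bool (T : finType) (P : pred T) : (\sum_x P x)%N = #|P|.
Proof.
by rewrite -sum1_card [RHS]big_mkcond; apply: eq_bigr => x _; rewrite unfold_in; case: (P x).
Qed.

Lemma conv_supported_on_plane (F : finFieldType) (g h : pt F -> algC) z x :
  supported_on_plane g z ->
  conv g h x = \sum_a g (a, z) * h ((x.1.1 - a.1, x.1.2 - a.2), x.2 - z).
Proof.
move=> gP; rewrite /conv big_pair; apply: eq_bigr => a _.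
rewrite (bigD1 z) //= big1 ?addr0 // => y3 y3_neq_z.
suff -> : g (a, y3) = 0 by rewrite mul0r.
by apply/eqP; apply: contraR y3_neq_z => /gP /= ->.
Qed.

Section AdditiveCharacter.

Variables (F : finFieldType) (e : F -> algC).
Hypothesis eD : forall x y, e (x + y) = e x * e y.
Hypothesis e0 : e 0 = 1.
Hypothesis e_nontriv : exists x, e x != 1.

Local Notation q := (#|F|%:R : algC).

Lemma addchar_norm x : `|e x| = 1.
Proof.
have [p p_pr pF] := finPcharP F.
have eMn n : e (x *+ n) = e x ^+ n.
  by elim: n => [|n IHn]; rewrite ?mulr0n ?e0 ?expr0 // mulrS eD IHn exprS.
have /(congr1 (fun y => `|y|))/eqP : e x ^+ p = 1 by rewrite -eMn (mulrn_pchar pF) e0.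
by rewrite normrX normr1 pexpr_eq1 ?prime_gt0 // => /eqP.
Qed.

Lemma addchar_neq0 x : e x != 0.
Proof. by rewrite -normr_eq0 addchar_norm oner_eq0. Qed.

Lemma addcharN x : e (- x) = (e x)^*.
Proof.
apply: (mulfI (addchar_neq0 x)).
by rewrite -eD subrr e0 -normCK addchar_norm expr1n.
Qed.

Lemma addcharB x y : e (x - y) = e x * (e y)^*.
Proof. by rewrite eD addcharN. Qed.

Lemma card_fin_gt0 : 0 < q.
Proof. by rewrite ltr0n; apply/card_gt0P; exists 0. Qed.

Lemma sum_addchar_mul c : \sum_a e (c * a) = if c == 0 then q else 0.
Proof.
have [->|c_neq0] := eqVneq c 0.
  by under eq_bigr do rewrite mul0r e0; rewrite sumr_const.
rewrite (reindex_inj (mulfI (invr_neq0 c_neq0))) /=.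
under eq_bigr do rewrite mulrA mulfV // mul1r.
have [x0 ex0_neq1] := e_nontriv.
have : e x0 * \sum_a e a = \sum_a e a.
  rewrite mulr_sumr (reindex_inj (addrI (- x0))) /=.
  by apply: eq_bigr => a _; rewrite -eD addrA subrr add0r.
move/eqP; rewrite -subr_eq0 -{2}[\sum_a e a]mul1r -mulrBl mulf_eq0 subr_eq0.
by rewrite (negbTE ex0_neq1) => /eqP.
Qed.

Lemma sum_addchar_dot2 c :
  \sum_v e (dot2 c v) = if c == (0, 0) then q ^+ 2 else 0.
Proof.
rewrite big_pair.
under eq_bigr do under eq_bigr do rewrite /dot2 /= eD.
under eq_bigr do rewrite -mulr_sumr.
rewrite -mulr_suml !sum_addchar_mul; case: c => c1 c2 /=; rewrite xpair_eqE.
by case: eqP; case: eqP; rewrite ?mulr0 ?mul0r.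
Qed.

Lemma sum_normCK_addchar (X P : finType) (a : P -> algC) (phi : P -> X -> F) :
  \sum_x `|\sum_p a p * e (phi p x)| ^+ 2 =
  \sum_p1 \sum_p2 a p1 * (a p2)^* * \sum_x e (phi p1 x - phi p2 x).
Proof.
under eq_bigr do rewrite normCK rmorph_sum mulr_suml.
under eq_bigr do under eq_bigr do rewrite mulr_sumr.
rewrite exchange_big; apply: eq_bigr => p1 _.
rewrite exchange_big; apply: eq_bigr => p2 _.
rewrite mulr_sumr; apply: eq_bigr => x _.
by rewrite addcharB rmorphM /=; ring.
Qed.

Hypothesis two_neq0 : (2 : F) != 0.

Definition gauss_sum2 (t : F) : algC := \sum_u e (t * dot2 u u).

Lemma four_neq0 : (4 : F) != 0.
Proof. by rewrite (_ : 4 = 2 * 2 :> F) ?mulf_neq0 //; ring. Qed.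

Lemma sum_addchar_quadratic t v : t != 0 ->
  \sum_u e (dot2 v u + t * dot2 u u) = e (- ((4 * t)^-1 * dot2 v v)) * gauss_sum2 t.
Proof.
move=> t_neq0.
(* Substitute u := u - v/(2t). *)
pose d := (2 * (4 * t)^-1 * v.1, 2 * (4 * t)^-1 * v.2).
have shift_inj : injective (fun u : F * F => (u.1 - d.1, u.2 - d.2)).
  by move=> [a b] [c d'] /= [] /addIr -> /addIr ->.
rewrite (reindex_inj shift_inj) /gauss_sum2 mulr_sumr; apply: eq_bigr => u _.
rewrite -eD; congr e; rewrite /dot2 /d /=.
by field; rewrite t_neq0 four_neq0.
Qed.

Lemma gauss_sum2_normCK t : t != 0 -> `|gauss_sum2 t| ^+ 2 = q ^+ 2.
Proof.
(* After u := h + v, the sum over v is a character sum at 2th, so only h = 0 survives. *)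
move=> t_neq0.
rewrite normCK /gauss_sum2 rmorph_sum mulr_suml.
under eq_bigr do rewrite mulr_sumr.
rewrite exchange_big /=.
have shift_inj (v : F * F) : injective (fun h : F * F => (h.1 + v.1, h.2 + v.2)).
  by move=> [a b] [c d] /= [] /addIr -> /addIr ->.
under eq_bigr => v _ do rewrite (reindex_inj (shift_inj v)).
have expand_sq (v h : F * F) :
    e (t * dot2 (h.1 + v.1, h.2 + v.2) (h.1 + v.1, h.2 + v.2)) * (e (t * dot2 v v))^*
    = e (t * dot2 h h) * e (dot2 (2 * t * h.1, 2 * t * h.2) v).
  by rewrite -addcharB -eD; congr e; rewrite /dot2 /=; ring.
under eq_bigr do under eq_bigr do rewrite expand_sq.
rewrite exchange_big /=.
under eq_bigr do rewrite -mulr_sumr sum_addchar_dot2.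
rewrite (bigD1 (0, 0)) //= big1 ?addr0.
  by rewrite !mulr0 eqxx /dot2 /= (_ : t * _ = 0) ?e0 ?mul1r //; ring.
move=> [a b] /=; rewrite !xpair_eqE negb_and !mulf_eq0 (negbTE two_neq0) (negbTE t_neq0).
by case/orP=> /negbTE ->; rewrite ?andbF mulr0.
Qed.

End AdditiveCharacter.

Section Kernel.

Variables (F : finFieldType) (e : F -> algC).
Hypothesis eD : forall x y, e (x + y) = e x * e y.
Hypothesis e0 : e 0 = 1.
Hypothesis e_nontriv : exists x, e x != 1.
Hypothesis two_neq0 : (2 : F) != 0.

Local Notation q := (#|F|%:R : algC).

Lemma Kker_plane0 v : Kker e (v, 0) = 0.
Proof.
rewrite /Kker /dsigma_check /delta0.
under eq_bigr do rewrite /dot3 /= mul0r addr0.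
rewrite (sum_addchar_dot2 eD e0 e_nontriv) /= xpair_eqE eqxx andbT.
case: eqP => _; last by rewrite mulr0 subrr.
by rewrite mulVf ?subrr // expf_neq0 // lt0r_neq0 // (card_fin_gt0 F).
Qed.

Lemma Kker_off_plane v t : t != 0 ->
  Kker e (v, t) = q ^- 2 * (e (- ((4 * t)^-1 * dot2 v v)) * gauss_sum2 e t).
Proof.
move=> t_neq0; rewrite /Kker /dsigma_check /delta0 /= xpair_eqE (negbTE t_neq0) andbF.
by under eq_bigr do rewrite /dot3 /=; rewrite (sum_addchar_quadratic eD) // subr0.
Qed.

Variables (g : pt F -> algC) (z : F).
Hypothesis gP : supported_on_plane g z.

Lemma conv_Kker_on_plane x : x.2 = z -> conv g (Kker e) x = 0.
Proof.
move=> x2z; rewrite (conv_supported_on_plane _ _ gP); apply: big1 => a _.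
by rewrite x2z subrr Kker_plane0 mulr0.
Qed.

Lemma conv_Kker_off_plane x : x.2 != z ->
  conv g (Kker e) x = q ^- 2 * gauss_sum2 e (x.2 - z) *
    \sum_a g (a, z) * e (- ((4 * (x.2 - z))^-1 *
      dot2 (x.1.1 - a.1, x.1.2 - a.2) (x.1.1 - a.1, x.1.2 - a.2))).
Proof.
move=> x2_neq_z; rewrite (conv_supported_on_plane _ _ gP) mulr_sumr.
apply: eq_bigr => a _; rewrite Kker_off_plane ?subr_eq0 //; ring.
Qed.

End Kernel.

Lemma addchar0_cases (F : finFieldType) (e : F -> algC) :
  (forall x y, e (x + y) = e x * e y) -> e 0 = 1 \/ forall x, e x = 0.
Proof.
move=> eD; have : e 0 * (e 0 - 1) = 0 by rewrite mulrBr mulr1 -eD addr0 subrr.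
move/eqP; rewrite mulf_eq0 subr_eq0 => /orP[/eqP e00|/eqP]; last by left.
by right=> x; rewrite -[x]addr0 eD e00 mulr0.
Qed.

Lemma conv_Kker_zero_char (F : finFieldType) (e : F -> algC) g z x :
  (forall y, e y = 0) -> supported_on_plane g z -> x.2 != z -> conv g (Kker e) x = 0.
Proof.
move=> e_eq0 gP x2_neq_z; rewrite (conv_supported_on_plane _ _ gP); apply: big1 => a _.
rewrite /Kker /dsigma_check /delta0 /= xpair_eqE.
rewrite (negbTE (_ : x.2 - z != 0)) ?subr_eq0 // andbF subr0.
by rewrite big1 ?mulr0 // => u _; rewrite e_eq0.
Qed.

Lemma pencil_root_uniq (F : fieldType) (z z' w1 w2 d d' : F) : z != z' ->
  (w1 - z') * d + (w1 - z) * d' = 0 -> (w2 - z') * d + (w2 - z) * d' = 0 ->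
  w1 = w2 \/ d = 0 /\ d' = 0.
Proof.
move=> zz' E1 E2.
have /eqP : (w1 - w2) * (d + d') = 0 by rewrite -[RHS](subrr 0) -{1}E1 -E2; ring.
rewrite mulf_eq0 subr_eq0 => /orP[/eqP ->|]; first by left.
rewrite addr_eq0 => /eqP d'E; right.
have /eqP : (z - z') * d' = 0 by rewrite -[0]oppr0 -E1 d'E; ring.
rewrite mulf_eq0 subr_eq0 (negbTE zz') /= => /eqP d'0.
by rewrite d'E d'0 oppr0.
Qed.

Section PhaseMatch.

Variables (F : finFieldType) (z z' : F).

(* Up to the factor 2(w-z)(w-z'), this says that the phases of p1 and p2 on the
   plane x_3 = w (see [phase] below) have the same linear part. *)
Definition phase_match (w : F) (p1 p2 : (F * F) * (F * F)) : bool :=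
  [&& w != z, w != z',
   (w - z') * (p1.1.1 - p2.1.1) + (w - z) * (p1.2.1 - p2.2.1) == 0 &
   (w - z') * (p1.1.2 - p2.1.2) + (w - z) * (p1.2.2 - p2.2.2) == 0].

Lemma phase_match_trapezoid w p1 p2 :
  phase_match w p1 p2 -> trapezoid p1.1 p2.1 p1.2 p2.2.
Proof.
case/and4P=> _ wz' /eqP E1 /eqP E2.
have s_neq0 : w - z' != 0 by rewrite subr_eq0.
apply/existsP; exists (- (w - z) / (w - z')).
apply/andP; split; rewrite -subr_eq0; apply/eqP.
  by rewrite -(mulr0 (w - z')^-1) -E1; field.
by rewrite -(mulr0 (w - z')^-1) -E2; field.
Qed.

Hypothesis zz' : z != z'.

Lemma phase_match_uniq w1 w2 p1 p2 :
  p1 != p2 -> phase_match w1 p1 p2 -> phase_match w2 p1 p2 -> w1 = w2.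
Proof.
case: p1 p2 => [[x1 x2] [x3 x4]] [[y1 y2] [y3 y4]] p12.
case/and4P=> _ _ /eqP /= A1 /eqP /= A2 /and4P[_ _ /eqP /= B1 /eqP /= B2].
have [//|[/eqP + /eqP]] := pencil_root_uniq zz' A1 B1.
have [//|[/eqP + /eqP]] := pencil_root_uniq zz' A2 B2.
rewrite !subr_eq0 => /eqP E2 /eqP E4 /eqP E1 /eqP E3.
by move: p12; rewrite E1 E2 E3 E4 eqxx.
Qed.

Lemma sum_phase_match_le p1 p2 :
  (\sum_w phase_match w p1 p2 <= #|F| * (p1 == p2) + trapezoid p1.1 p2.1 p1.2 p2.2)%N.
Proof.
rewrite sum_nat_of_bool.
have [<-|p12] := eqVneq p1 p2; first by rewrite muln1 (leq_trans (max_card _)) ?leq_addr.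
rewrite muln0 add0n.
case trap: (trapezoid _ _ _ _).
  apply/card_le1_eqP => w1 w2; rewrite !unfold_in => w1P w2P.
  exact: phase_match_uniq p12 w2P w1P.
rewrite /= leqn0; apply/eqP/eq_card0 => w; apply/negP; rewrite unfold_in.
by move/phase_match_trapezoid; rewrite trap.
Qed.

End PhaseMatch.

Lemma sum_count_diag_trapezoid (F : finFieldType) (A B : {set F * F}) :
  (\sum_(p1 : (F * F) * (F * F)) \sum_(p2 : (F * F) * (F * F))
     ((p1.1 \in A) && (p1.2 \in B)) * ((p2.1 \in A) && (p2.2 \in B)) *
     (#|F| * (p1 == p2) + trapezoid p1.1 p2.1 p1.2 p2.2))%N
  = (#|F| * (#|A| * #|B|) + trap_count A B)%N.
Proof.
under eq_bigr do under eq_bigr do rewrite mulnDr.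
under eq_bigr do rewrite big_split /=.
rewrite big_split /=; congr (_ + _)%N.
  rewrite -cardsX -[#|setX A B|]sum1_card [in RHS]big_mkcond big_distrr /=.
  apply: eq_bigr => p1 _; rewrite (bigD1 p1) //= big1 ?addn0.
    by rewrite eqxx muln1 mulnb andbb inE mulnC; case: (_ && _).
  by move=> p2 /negbTE; rewrite eq_sym => ->; rewrite !muln0.
rewrite /trap_count cardsE -sum_nat_of_bool.
pose swap (p : ((F * F) * (F * F)) * ((F * F) * (F * F))) :=
  ((p.1.1, p.2.1), (p.1.2, p.2.2)).
have swapK : involutive swap by case=> [[a b] [c d]].
rewrite (reindex_inj (inv_inj swapK)) [RHS]big_pair.
apply: eq_bigr => p1 _; apply: eq_bigr => p2 _.
by rewrite /= !mulnb; case: (p1.1 \in A); case: (p1.2 \in B); case: (p2.1 \in A).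
Qed.

Section ConvolutionProduct.

Variables (F : finFieldType) (e : F -> algC).
Hypothesis eD : forall x y, e (x + y) = e x * e y.
Hypothesis e0 : e 0 = 1.
Hypothesis e_nontriv : exists x, e x != 1.
Hypothesis two_neq0 : (2 : F) != 0.
Variables (z z' : F) (gz gz' : pt F -> algC).
Hypotheses (gzP : supported_on_plane gz z) (gz'P : supported_on_plane gz' z').

Local Notation q := (#|F|%:R : algC).
Local Notation pairs := ((F * F) * (F * F))%type.

Definition pair_weight (p : pairs) : algC := gz (p.1, z) * gz' (p.2, z').

Definition phase (w : F) (p : pairs) (v : F * F) : F :=
  - ((4 * (w - z))^-1 * dot2 (v.1 - p.1.1, v.2 - p.1.2) (v.1 - p.1.1, v.2 - p.1.2))
  - (4 * (w - z'))^-1 * dot2 (v.1 - p.2.1, v.2 - p.2.2) (v.1 - p.2.1, v.2 - p.2.2).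

Lemma conv_Kker_mul_off_planes w v : w != z -> w != z' ->
  conv gz (Kker e) (v, w) * conv gz' (Kker e) (v, w) =
  q ^- 2 * gauss_sum2 e (w - z) * (q ^- 2 * gauss_sum2 e (w - z')) *
  \sum_p pair_weight p * e (phase w p v).
Proof.
move=> wz wz'.
rewrite (conv_Kker_off_plane eD two_neq0 gzP) //.
rewrite (conv_Kker_off_plane eD two_neq0 gz'P) //=.
rewrite mulrACA; congr (_ * _).
rewrite mulr_suml [RHS]big_pair; apply: eq_bigr => a _.
rewrite mulr_sumr; apply: eq_bigr => b _.
by rewrite /pair_weight /phase eD /=; ring.
Qed.

Lemma norm_sum_phaseB_le w p1 p2 : w != z -> w != z' ->
  `|\sum_v e (phase w p1 v - phase w p2 v)| <= q ^+ 2 * (phase_match z z' w p1 p2)%:R.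
Proof.
move=> wz wz'.
have t_neq0 : w - z != 0 by rewrite subr_eq0.
have s_neq0 : w - z' != 0 by rewrite subr_eq0.
set rt := (4 * (w - z))^-1; set rs := (4 * (w - z'))^-1.
pose c := (2 * rt * (p1.1.1 - p2.1.1) + 2 * rs * (p1.2.1 - p2.2.1),
           2 * rt * (p1.1.2 - p2.1.2) + 2 * rs * (p1.2.2 - p2.2.2)).
pose c0 := - (rt * (dot2 p1.1 p1.1 - dot2 p2.1 p2.1))
           - rs * (dot2 p1.2 p1.2 - dot2 p2.2 p2.2).
have phaseB v : phase w p1 v - phase w p2 v = c0 + dot2 c v.
  by rewrite /phase /c0 /c /dot2 /rt /rs /=; ring.
under eq_bigr do rewrite phaseB eD.
rewrite -mulr_sumr (sum_addchar_dot2 eD e0 e_nontriv) normrM (addchar_norm eD e0) mul1r.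
have [|_] := eqVneq c (0, 0); last by rewrite normr0 mulr_ge0 ?exprn_ge0 ?ler0n.
rewrite /c /phase_match wz wz' /= => -[c1 c2].
have scale_c (d1 d2 d1' d2' : F) :
    (w - z') * (d1 - d2) + (w - z) * (d1' - d2') =
    (2 * rt * (d1 - d2) + 2 * rs * (d1' - d2')) * (2 * (w - z) * (w - z')).
  by rewrite /rt /rs; field; rewrite t_neq0 s_neq0 four_neq0.
rewrite !scale_c c1 c2 !mul0r eqxx mulr1 ger0_norm //.
by rewrite exprn_ge0 ?ler0n.
Qed.

Lemma sum_plane_normCK_le w :
  \sum_v `|conv gz (Kker e) (v, w) * conv gz' (Kker e) (v, w)| ^+ 2 <=
  q ^- 2 * \sum_p1 \sum_p2
    `|pair_weight p1| * `|pair_weight p2| * (phase_match z z' w p1 p2)%:R.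
Proof.
have q_gt0 := card_fin_gt0 F.
have qinv2_ge0 : 0 <= q ^- 2 by rewrite invr_ge0 exprn_ge0 ?ltW.
have rhs_ge0 : 0 <= q ^- 2 * \sum_p1 \sum_p2
    `|pair_weight p1| * `|pair_weight p2| * (phase_match z z' w p1 p2)%:R.
  apply: mulr_ge0 => //; apply: sumr_ge0 => p1 _; apply: sumr_ge0 => p2 _.
  by rewrite !mulr_ge0 ?ler0n.
have [wz|wz] := eqVneq w z.
  rewrite big1 // => v _.
  by rewrite (conv_Kker_on_plane eD e0 e_nontriv gzP) ?mul0r ?normr0 ?expr0n.
have [wz'|wz'] := eqVneq w z'.
  rewrite big1 // => v _.
  by rewrite [conv gz' _ _](conv_Kker_on_plane eD e0 e_nontriv gz'P) ?mulr0 ?normr0 ?expr0n.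
under eq_bigr => v _ do rewrite conv_Kker_mul_off_planes // !normrM !exprMn
  !(gauss_sum2_normCK eD e0 e_nontriv two_neq0) ?subr_eq0 // ger0_norm //.
rewrite -mulr_sumr.
set S := (X in _ * X <= _).
have S_ge0 : 0 <= S by apply: sumr_ge0 => v _; rewrite exprn_ge0.
rewrite -(ger0_norm S_ge0) /S (sum_normCK_addchar eD e0).
rewrite (_ : (q ^- 2) ^+ 2 * q ^+ 2 * ((q ^- 2) ^+ 2 * q ^+ 2) = q ^- 4); last first.
  by field; rewrite lt0r_neq0.
apply: (@le_trans _ _ (q ^- 4 * (q ^+ 2 * \sum_p1 \sum_p2
    `|pair_weight p1| * `|pair_weight p2| * (phase_match z z' w p1 p2)%:R))).
  apply: ler_wpM2l; first by rewrite invr_ge0 exprn_ge0 ?ltW.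
  rewrite mulr_sumr; apply: le_trans (ler_norm_sum _ _ _) _; apply: ler_sum => p1 _.
  rewrite mulr_sumr; apply: le_trans (ler_norm_sum _ _ _) _; apply: ler_sum => p2 _.
  rewrite normrM (normrM (pair_weight p1)) norm_conjC [in leRHS]mulrCA.
  by apply: ler_wpM2l; [rewrite mulr_ge0 | exact: norm_sum_phaseB_le].
by rewrite mulrA (_ : q ^- 4 * q ^+ 2 = q ^- 2) //; field; rewrite lt0r_neq0.
Qed.

Lemma L2sq_conv_Kker_le : z != z' ->
  L2sq (fun x => conv gz (Kker e) x * conv gz' (Kker e) x) <=
  q ^- 2 * \sum_p1 \sum_p2 `|pair_weight p1| * `|pair_weight p2| *
    (#|F| * (p1 == p2) + trapezoid p1.1 p2.1 p1.2 p2.2)%:R.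
Proof.
move=> zz'.
rewrite /L2sq big_pair exchange_big /=.
apply: le_trans (ler_sum _ (fun w _ => sum_plane_normCK_le w)) _.
rewrite -mulr_sumr ler_wpM2l ?invr_ge0 ?exprn_ge0 ?ler0n //.
rewrite exchange_big; apply: ler_sum => p1 _.
rewrite exchange_big; apply: ler_sum => p2 _.
by rewrite -mulr_sumr -natr_sum ler_wpM2l ?mulr_ge0 // ler_nat sum_phase_match_le.
Qed.

End ConvolutionProduct.

Lemma norm_le_slice (F : finFieldType) (g : pt F -> algC) z a :
  sim1_on_support g -> `|g (a, z)| <= 2 * (a \in slice g z)%:R.
Proof.
move=> g_sim1; rewrite inE.
have [->|ga_neq0] := eqVneq (g (a, z)) 0; first by rewrite normr0 mulr0.
by rewrite mulr1; case/andP: (g_sim1 _ ga_neq0).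
Qed.

Lemma sum_pair_weight_le (F : finFieldType) (z z' : F) (gz gz' : pt F -> algC) :
  sim1_on_support gz -> sim1_on_support gz' ->
  \sum_p1 \sum_p2 `|pair_weight z z' gz gz' p1| * `|pair_weight z z' gz gz' p2| *
    (#|F| * (p1 == p2) + trapezoid p1.1 p2.1 p1.2 p2.2)%:R
  <= 16 * (#|F| * (#|slice gz z| * #|slice gz' z'|)
           + trap_count (slice gz z) (slice gz' z'))%:R.
Proof.
move=> gz_sim1 gz'_sim1.
have weight_le p : `|pair_weight z z' gz gz' p| <=
    4 * ((p.1 \in slice gz z) && (p.2 \in slice gz' z'))%:R.
  rewrite normrM -mulnb natrM -[4]/(2 * 2)%:R natrM mulrACA.
  by apply: ler_pM; rewrite ?norm_le_slice.
rewrite -sum_count_diag_trapezoid natr_sum mulr_sumr; apply: ler_sum => p1 _.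
rewrite natr_sum mulr_sumr; apply: ler_sum => p2 _.
rewrite !natrM mulrA; apply: ler_pM => //; first exact: mulr_ge0.
rewrite -[16]/(4 * 4)%:R natrM mulrACA.
by apply: ler_pM; rewrite ?weight_le.
Qed.

Theorem proposition3p1 :
  exists C : algC, 0 <= C /\
  forall (F : finFieldType) (e : F -> algC),
    ~~ (2 \in [pchar F]) ->
    ~ (exists y : F, y * y = -1) ->
    is_nontriv_add_char e ->
    forall (z z' : F) (gz gz' : pt F -> algC),
      z != z' ->
      supported_on_plane gz z -> supported_on_plane gz' z' ->
      sim1_on_support gz -> sim1_on_support gz' ->
      L2sq (fun x => conv gz (Kker e) x * conv gz' (Kker e) x)
      <= C * ((#|F|%:R)^-1 * #|slice gz z|%:R * #|slice gz' z'|%:R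
              + (#|F|%:R)^-2 * (trap_count (slice gz z) (slice gz' z'))%:R).
Proof.
exists 16; split; first by rewrite ler0n.
(* Nor does
   [is_nontriv_add_char] force e 0 = 1: for e = 0 the convolutions are -gz and -gz',
   whose product vanishes. *)
move=> F e char_neq2 _ [eD e_nontriv] z z' gz gz' zz' gzP gz'P gz_sim1 gz'_sim1.
have q_gt0 := card_fin_gt0 F.
have [e0|e_eq0] := addchar0_cases eD; last first.
  rewrite /L2sq big1 => [|x _].
    by rewrite mulr_ge0 ?addr_ge0 ?mulr_ge0 ?invr_ge0 ?exprn_ge0 ?ler0n ?ltW.
  have [x2z|x2z] := eqVneq x.2 z; last first.
    by rewrite (conv_Kker_zero_char e_eq0 gzP x2z) mul0r normr0 expr0n.
  by rewrite (conv_Kker_zero_char e_eq0 gz'P) ?mulr0 ?normr0 ?expr0n // x2z.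
have two_neq0 : (2 : F) != 0.
  by apply: contra char_neq2 => two_eq0; rewrite inE /= two_eq0.
apply: le_trans (L2sq_conv_Kker_le eD e0 e_nontriv two_neq0 gzP gz'P zz') _.
apply: le_trans (ler_wpM2l _ (sum_pair_weight_le z z' gz_sim1 gz'_sim1)) _.
  by rewrite invr_ge0 exprn_ge0 ?ltW.
rewrite natrD !natrM le_eqVlt; apply/orP; left; apply/eqP.
by field; rewrite lt0r_neq0.
Qed.
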